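(* Let $(X,d)$ be a locally compact, second countable metric space. Let $(f_\lambda)$ be a sequence in $\Gamma(X)$ and $f,g\in C_{od}(X,X)$ such that $(f_\lambda)$ $\tau_{cc}$-converges to $f$, $(f_\lambda^{-1})$ $\tau_{cc}$-converges to $g$, $\mathrm{im}(f)\subseteq\mathrm{dom}(g)$ and $\mathrm{im}(g)\subseteq\mathrm{dom}(f)$. Then $f$ and $g$ are homeomorphisms (onto their images) and $f^{-1}=g$.
   Context: $\Gamma(X)$ denotes the set of homeomorphisms $f:\mathrm{dom}(f)\to\mathrm{im}(f)$ between open subsets of $X$ (including the empty function). $C_{od}(X,X)$ is the set of continuous maps $f:\mathrm{dom}(f)\to X$ with $\mathrm{dom}(f)$ open in $X$. A sequence $(h_\lambda)$ in $C_{od}(X,X)$ $\tau_{cc}$-converges to $h\in C_{od}(X,X)$ if for every nonempty compact $K\subseteq\mathrm{dom}(h)$ and $\epsilon>0$ there is $\lambda_0$ such that for all $\lambda\ge\lambda_0$, $K\subseteq\mathrm{dom}(h_\lambda)$ and $\sup_{x\in K}d(h_\lambda(x),h(x))<\epsilon$. *)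

From HB Require Import structures.
From mathcomp Require Import all_boot all_order all_algebra.
From mathcomp Require Import all_classical all_reals all_analysis.
Set Implicit Arguments. Unset Strict Implicit. Unset Printing Implicit Defensive.
Import Order.TTheory GRing.Theory Num.Theory.
Local Open Scope classical_set_scope.
Local Open Scope ring_scope.

(* A partial map of X is represented by a domain D : set X together with a
   total function f : X -> X whose values outside D are irrelevant. *)

Definition in_Cod (X : topologicalType) (D : set X) (f : X -> X) : Prop :=
  open D /\ {within D, continuous f}.

Definition in_Gamma (X : topologicalType) (D : set X) (f : X -> X)
    (E : set X) (finv : X -> X) : Prop :=
  [/\ open D, open E, f @` D = E & finv @` E = D] /\
  [/\ (forall x, D x -> finv (f x) = x),
      (forall y, E y -> f (finv y) = y),
      {within D, continuous f} & {within E, continuous finv}].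

Definition tau_cc_cvg (R : realType) (X : metricType R)
    (Dn : nat -> set X) (hn : nat -> X -> X) (D : set X) (h : X -> X) : Prop :=
  forall K : set X, K !=set0 -> compact K -> K `<=` D ->
  forall eps : R, 0 < eps ->
  exists l0 : nat, forall l, (l0 <= l)%N ->
    K `<=` Dn l /\ sup [set mdist (hn l x) (h x) | x in K] < eps.

From HB Require Import structures.
From mathcomp Require Import all_boot all_order all_algebra.
From mathcomp Require Import all_classical all_reals all_analysis.
From mathcomp Require Import lra.
Import Order.TTheory GRing.Theory Num.Theory.

Set Implicit Arguments.
Unset Strict Implicit.
Unset Printing Implicit Defensive.
Local Open Scope classical_set_scope.
Local Open Scope ring_scope.

(* Let y := f x.  For large l, f_l x lies in a compact neighbourhood K of y
   inside dom g, on which f_l^-1 is uniformly close to g; hence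
   x = f_l^-1 (f_l x) is close to g (f_l x), which is close to g y by
   continuity of g.  So g (f x) = x, symmetrically f (g y) = y, and the two
   continuous maps are mutually inverse homeomorphisms. *)

Lemma regular_compact_nbhs (T : topologicalType) (y : T) (D : set T) :
  locally_compact [set: T] -> regular_space T -> nbhs y D ->
  exists2 K, compact K & nbhs y K /\ K `<=` D.
Proof.
move=> lcT regT yD.
have [U yU [cU _]] := lcT y I; rewrite withinET in yU.
have [B yB clBD] := regT y D yD.
exists (U `&` closure B); first exact/compact_closedI/closed_closure.
split; last by move=> z [_ /clBD].
by apply: filterI yU (filterS (@subset_closure _ B) yB).
Qed.

Section MetricDistance.
Variables (R : realType) (X : metricType R).

Lemma mdist_lipschitz (a b a' b' : X) :
  `|mdist a' b' - mdist a b| <= mdist a a' + mdist b b'.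
Proof.
have := metric_triangle a a' b; have := metric_triangle a' b' b.
have := metric_triangle a' a b'; have := metric_triangle a b b'.
rewrite (metric_sym b' b) (metric_sym a' a) ler_norml => *.
apply/andP; split; lra.
Qed.

Lemma continuous_mdist (T : topologicalType) (a b : T -> X) :
  continuous a -> continuous b ->
  continuous (fun t => (mdist (a t) (b t) : R^o)).
Proof.
move=> ca cb t; apply/cvgrPdist_lt => e e0.
have e20 : 0 < e / 2 by rewrite divr_gt0.
have /metricType_numDomainType.cvgrPdist_lt /(_ _ e20) near_a := ca t.
have /metricType_numDomainType.cvgrPdist_lt /(_ _ e20) near_b := cb t.
near=> s; rewrite distrC (le_lt_trans (mdist_lipschitz _ _ (a s) (b s))) //.
have : mdist (a t) (a s) < e / 2 by near: s.
have : mdist (b t) (b s) < e / 2 by near: s.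
lra.
Unshelve. all: by end_near. Qed.

Lemma compact_mdist_ubound (T : topologicalType) (A : set T) (a b : T -> X) :
  compact A -> {within A, continuous a} -> {within A, continuous b} ->
  has_ubound [set mdist (a z) (b z) | z in A].
Proof.
move=> cA ca cb.
have cab := @continuous_mdist (subspace A) a b ca cb.
have /pinfty_ex_gt0 [M _ AM] := compact_bounded (continuous_compact cab cA).
exists M => _ [z Az <-]; apply: le_trans (ler_norm _) (AM _ _).
by exists z.
Qed.

Variables (Dn : nat -> set X) (hn : nat -> X -> X) (D : set X) (h : X -> X).
Hypothesis hn_cvg : tau_cc_cvg Dn hn D h.

Lemma tau_cc_cvg_pointwise x : D x ->
  (\forall l \near \oo, Dn l x) /\ hn l x @[l --> \oo] --> h x.
Proof.
move=> Dx.
have near_x eps : 0 < eps ->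
    \forall l \near \oo, Dn l x /\ mdist (hn l x) (h x) < eps.
  move=> eps0; have [|l0 Hl0] :=
    @hn_cvg [set x] (ex_intro _ x erefl) (@compact_set1 _ x) _ _ eps0.
    by move=> _ ->.
  by exists l0 => // l /Hl0 [/(_ x erefl) Dnx]; rewrite image_set1 sup1.
split; first by apply: filterS (near_x _ ltr01) => l [].
apply/metricType_numDomainType.cvgrPdist_lt => eps eps0.
by apply: filterS (near_x _ eps0) => l [_]; rewrite metric_sym.
Qed.

Lemma tau_cc_cvg_uniform (K : set X) (eps : R) :
  (forall l, {within Dn l, continuous hn l}) -> {within D, continuous h} ->
  compact K -> K `<=` D -> 0 < eps ->
  \forall l \near \oo,
    K `<=` Dn l /\ forall x, K x -> mdist (hn l x) (h x) < eps.
Proof.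
move=> chn ch cK KD eps0.
have [->|/set0P K0] := eqVneq K set0; first by apply: nearW => l; split.
have [l0 Hl0] := @hn_cvg K K0 cK KD _ eps0.
exists l0 => // l /Hl0 [KDn supK]; split => // x Kx.
apply: le_lt_trans supK; apply: ub_le_sup; last by exists x.
apply: compact_mdist_ubound cK _ _.
- exact: continuous_subspaceW KDn (chn l).
- exact: continuous_subspaceW KD ch.
Qed.

End MetricDistance.

Section LimitCancel.
Variables (R : realType) (X : metricType R).
Hypothesis lcX : locally_compact [set: X].
Variables (Dn En : nat -> set X) (fn fninv : nat -> X -> X).
Hypothesis fnK : forall l x, Dn l x -> fninv l (fn l x) = x.
Hypothesis fninv_cont : forall l, {within En l, continuous fninv l}.
Variables (Df Dg : set X) (f g : X -> X).
Hypotheses (Dg_open : open Dg) (g_cont : {within Dg, continuous g}).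
Hypothesis fn_cvg : tau_cc_cvg Dn fn Df f.
Hypothesis fninv_cvg : tau_cc_cvg En fninv Dg g.

Lemma tau_cc_cvg_limit_cancel x : Df x -> Dg (f x) -> g (f x) = x.
Proof.
move=> Dfx Dgy; set y := f x in Dgy *.
have [K cK [yK KDg]] := regular_compact_nbhs lcX uniform_regular
  (open_nbhs_nbhs (conj Dg_open Dgy)).
have [Dnx fnx_cvg] := tau_cc_cvg_pointwise fn_cvg Dfx.
have gy_cont : {for y, continuous g}.
  have := g_cont; rewrite continuous_open_subspace // => /(_ y).
  by apply; rewrite inE.
have gfnx_cvg : g (fn l x) @[l --> \oo] --> g y := cvg_comp _ _ fnx_cvg gy_cont.
apply/mdist_positivity/eqP; rewrite eq_le mdist_ge0 andbT.
apply/ler_addgt0Pr => e e0; rewrite add0r.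
have e20 : 0 < e / 2 by rewrite divr_gt0.
near \oo => l.
have [_ fninv_near] : K `<=` En l /\
    forall z, K z -> mdist (fninv l z) (g z) < e / 2.
  near: l.
  exact: (tau_cc_cvg_uniform fninv_cvg fninv_cont g_cont cK KDg e20).
have Kz : K (fn l x) by near: l; exact: fnx_cvg.
have gz_near : mdist (g y) (g (fn l x)) < e / 2.
  by near: l; exact: metricType_numDomainType.cvgr_dist_lt gfnx_cvg _ e20.
have := fninv_near _ Kz; rewrite fnK; last by near: l.
have := metric_triangle (g y) (g (fn l x)) x.
rewrite (metric_sym (g (fn l x)) x).
lra.
Unshelve. all: by end_near. Qed.

End LimitCancel.

Lemma in_Gamma_cancel (X : topologicalType) (D E : set X) (f g : X -> X) :
  in_Cod D f -> in_Cod E g -> f @` D `<=` E -> g @` E `<=` D ->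
  (forall x, D x -> g (f x) = x) -> (forall y, E y -> f (g y) = y) ->
  in_Gamma D f E g.
Proof.
move=> [oD cf] [oE cg] fDE gED fK gK; split; split => //.
- apply/seteqP; split => // y Ey.
  by exists (g y); [apply: gED; exists y | exact: gK].
- apply/seteqP; split => // x Dx.
  by exists (f x); [apply: fDE; exists x | exact: fK].
Qed.

Theorem mainTheorem11 (R : realType) (X : metricType R)
  (hlc : locally_compact [set: X]) (hsc : @second_countable X)
  (Dn : nat -> set X) (fn : nat -> X -> X) (En : nat -> set X) (fninv : nat -> X -> X)
  (hG : forall l, in_Gamma (Dn l) (fn l) (En l) (fninv l))
  (Df : set X) (f : X -> X) (Dg : set X) (g : X -> X)
  (hf : in_Cod Df f) (hg : in_Cod Dg g)
  (hcf : tau_cc_cvg Dn fn Df f) (hcg : tau_cc_cvg En fninv Dg g)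
  (himf : f @` Df `<=` Dg) (himg : g @` Dg `<=` Df) :
  in_Gamma Df f Dg g.
Proof.
have fnK l : forall x, Dn l x -> fninv l (fn l x) = x by case: (hG l) => _ [].
have fninvK l : forall y, En l y -> fn l (fninv l y) = y.
  by case: (hG l) => _ [].
have fninv_cont l : {within En l, continuous fninv l} by case: (hG l) => _ [].
have fn_cont l : {within Dn l, continuous fn l} by case: (hG l) => _ [].
case: (hf) (hg) => [oDf cf] [oDg cg].
apply: in_Gamma_cancel => // [x Dfx | y Dgy].
- apply: (tau_cc_cvg_limit_cancel hlc fnK fninv_cont oDg cg hcf hcg Dfx).
  by apply: himf; exists x.
- apply: (tau_cc_cvg_limit_cancel hlc fninvK fn_cont oDf cf hcg hcf Dgy).
  by apply: himg; exists y.
Qed.
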